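(* Let $n\ge2$, $q=2^m$, and let $\mathbf{H}_X^{(q)}$ be a $q$-ary labeling of the toric Tanner graph $\mathcal{G}_X$ (as defined in the context) with code $\mathcal{C}_X^{(q)}$. If every cycle of the labeled graph $\mathcal{G}_X$ has product $1$, then $\dim_{\mathbb{F}_q}\mathcal{C}_X^{(q)}=n^2+1$.
   Context: Indices are taken in $\mathbb{Z}_{2n}=\{0,\dots,2n-1\}$ with arithmetic mod $2n$. Variable nodes: $V=\{(i,j)\in\mathbb{Z}_{2n}^2: i+j\text{ even}\}$ ($2n^2$ nodes). $X$-check nodes: $C_X=\{(i,j): i\text{ odd}, j\text{ even}\}$ ($n^2$ nodes). Each check node $(i,j)$ is adjacent to the four variable nodes $(i\pm1,j)$, $(i,j\pm1)$; $\mathcal{G}_X$ is the resulting bipartite graph on $V\cup C_X$. A $q$-ary labeling is a matrix $\mathbf{H}_X^{(q)}=(x_{c,v})\in\mathbb{F}_q^{C_X\times V}$ with $x_{c,v}\neq0$ iff $c$ and $v$ are adjacent; the label of edge $(c,v)$ is $x_{c,v}$. $\mathcal{C}_X^{(q)}=\{w\in\mathbb{F}_q^V:\mathbf{H}_X^{(q)}w=0\}$. For a cycle $v_1,c_1,v_2,\dots,v_k,c_k,v_1$ its product is $\prod_{t=1}^k x_{c_t v_{t+1}}x_{c_t v_t}^{-1}$ (indices of $v$ mod $k$). *)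

From HB Require Import structures.
From mathcomp Require Import all_boot all_order all_algebra.
Set Implicit Arguments. Unset Strict Implicit. Unset Printing Implicit Defensive.
Import GRing.Theory.
Local Open Scope ring_scope.

(* Grid points of Z_{2n} x Z_{2n}, coordinates as ordinals < 2n (arithmetic mod 2n). *)
Definition grid (n : nat) := ('I_(2 * n) * 'I_(2 * n))%type.

Definition is_var (n : nat) (p : grid n) : bool := ~~ odd (p.1 + p.2)%N.
Definition is_xcheck (n : nat) (p : grid n) : bool := odd p.1 && ~~ odd p.2.

Definition Vnode (n : nat) := {p : grid n | is_var p}.
Definition Cnode (n : nat) := {p : grid n | is_xcheck p}.
HB.instance Definition _ n := Finite.on (Vnode n).
HB.instance Definition _ n := Finite.on (Cnode n).

Definition pm1 (N a b : nat) : bool :=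
  (a == (b + 1) %% N)%N || (a == (b + N - 1) %% N)%N.

Definition adj (n : nat) (c : Cnode n) (v : Vnode n) : bool :=
  let: (ci, cj) := val c in
  let: (vi, vj) := val v in
  (pm1 (2 * n) vi ci && (vj == cj :> nat)) ||
  ((vi == ci :> nat) && pm1 (2 * n) vj cj).

Definition is_labeling (F : fieldType) (n : nat) (x : Cnode n -> Vnode n -> F) : Prop :=
  forall c v, (x c v != 0) = adj c v.

(* A cycle v_1,c_1,v_2,...,v_k,c_k,v_1 in G_X (k >= 2, distinct nodes),
   with v_{t+1} taken cyclically (ordS). *)
Definition is_cycle (n k : nat) (vs : 'I_k -> Vnode n) (cs : 'I_k -> Cnode n) : Prop :=
  [/\ (2 <= k)%N, injective vs, injective cs &
      forall t : 'I_k, adj (cs t) (vs t) && adj (cs t) (vs (ordS t))].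

Definition cycle_product (F : fieldType) (n k : nat) (x : Cnode n -> Vnode n -> F)
  (vs : 'I_k -> Vnode n) (cs : 'I_k -> Cnode n) : F :=
  \prod_(t < k) (x (cs t) (vs (ordS t)) / x (cs t) (vs t)).

Definition syndrome (F : fieldType) (n : nat) (x : Cnode n -> Vnode n -> F)
  (w : {ffun Vnode n -> F^o}) : {ffun Cnode n -> F^o} :=
  [ffun c => \sum_(v : Vnode n) x c v * w v].

Definition codeX (F : fieldType) (n : nat) (x : Cnode n -> Vnode n -> F)
  : {vspace {ffun Vnode n -> F^o}} :=
  lker (linfun (syndrome x)).

From HB Require Import structures.
From mathcomp Require Import all_boot all_order all_algebra finfield zify ring.
Set Implicit Arguments. Unset Strict Implicit. Unset Printing Implicit Defensive.
Import GRing.Theory.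

(* Every variable node has exactly two check neighbours, so G_X is a subdivided
   n x n torus grid whose vertices are the X-checks.  Hence rank H_X = n^2 - 1 and
   dim C_X = 2 n^2 - (n^2 - 1).
   - rank H_X < n^2: give each check c a potential y c by multiplying the ratios
     x c v / x c' v along a spanning tree (column 0, then the rows).  Since every
     cycle product is 1 (rows, column 0 and unit squares suffice on the torus),
     y c x c v = y c' x c' v for both neighbours c, c' of every variable v, so in
     characteristic 2 the nonzero vector y lies in the left kernel of H_X.
   - rank H_X >= n^2 - 1: a vector in ker H_X supported on the n^2 - 1 edges of a
     spanning tree vanishes, as its values can be peeled off leaf by leaf. *)

Lemma pm1E (M i j : nat) : (i < M)%N -> (j < M)%N ->
  pm1 M i j = (i == j.+1 %% M) || (i.+1 %% M == j).
Proof.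
move=> hi hj; rewrite /pm1 addn1; congr orb.
rewrite -[i in LHS](modn_small hi) -(eqn_modDr 1) subnK; last by lia.
by rewrite modnDr (modn_small hj) addn1.
Qed.

Section TorusGrid.
Variable n : nat.

Fact ord_dbl_subproof (a : 'I_n) : (2 * a < 2 * n)%N.
Proof. by rewrite ltn_pmul2l. Qed.
Definition ord_dbl (a : 'I_n) : 'I_(2 * n) := Ordinal (ord_dbl_subproof a).

Fact ord_dblS_subproof (a : 'I_n) : ((2 * a).+1 < 2 * n)%N.
Proof. have := ltn_ord a; lia. Qed.
Definition ord_dblS (a : 'I_n) : 'I_(2 * n) := Ordinal (ord_dblS_subproof a).

Fact ord_half_subproof (i : 'I_(2 * n)) : (i./2 < n)%N.
Proof. have := ltn_ord i; lia. Qed.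
Definition ord_half (i : 'I_(2 * n)) : 'I_n := Ordinal (ord_half_subproof i).

Lemma ord_dblK : cancel ord_dbl ord_half.
Proof. move=> a; apply: val_inj => /=; lia. Qed.

Lemma ord_dblSK : cancel ord_dblS ord_half.
Proof. move=> a; apply: val_inj => /=; lia. Qed.

Lemma modn_ord_dblS (a : 'I_n) : ((2 * a).+1 %% (2 * n) = (2 * a).+1)%N.
Proof. exact/modn_small/ord_dblS_subproof. Qed.

Lemma modn_dbl_ordS (a : 'I_n) : ((2 * a).+2 %% (2 * n) = 2 * ordS a)%N.
Proof. by rewrite /= muln_modr mulnS. Qed.

(* The check chk a b sits at (2a+1, 2b); the variable hvar a b at (2a+1, 2b+1)
   joins chk a b to chk a (b+1), and vvar a b at (2a+2, 2b) joins chk a b to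
   chk (a+1) b, all indices mod n. *)
Fact chk_subproof (a b : 'I_n) : is_xcheck (ord_dblS a, ord_dbl b).
Proof. rewrite /is_xcheck /=; lia. Qed.
Definition chk (a b : 'I_n) : Cnode n :=
  exist _ (ord_dblS a, ord_dbl b) (chk_subproof a b).

Fact hvar_subproof (a b : 'I_n) : is_var (ord_dblS a, ord_dblS b).
Proof. rewrite /is_var /=; lia. Qed.
Definition hvar (a b : 'I_n) : Vnode n :=
  exist _ (ord_dblS a, ord_dblS b) (hvar_subproof a b).

Fact vvar_subproof (a b : 'I_n) : is_var (ord_dbl (ordS a), ord_dbl b).
Proof. rewrite /is_var /=; lia. Qed.
Definition vvar (a b : 'I_n) : Vnode n :=
  exist _ (ord_dbl (ordS a), ord_dbl b) (vvar_subproof a b).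

Lemma adj_chk_hvar a b a' b' :
  adj (chk a b) (hvar a' b') = (a' == a) && ((b' == b) || (ordS b' == b)).
Proof.
rewrite /adj /= !pm1E ?ord_dblS_subproof ?ord_dbl_subproof //.
rewrite modn_ord_dblS !modn_dbl_ordS.
have -> : ((2 * b').+1 == 2 * b)%N = false by lia.
by rewrite andbF orFb !eqSS !eqn_mul2l !orFb.
Qed.

Lemma adj_chk_vvar a b a' b' :
  adj (chk a b) (vvar a' b') = ((a' == a) || (ordS a' == a)) && (b' == b).
Proof.
rewrite /adj /= -[(a'.+1 %% n)%N]/(ordS a' : nat).
have -> : (2 * ordS a' == (2 * a).+1)%N = false by lia.
rewrite andFb orbF pm1E ?ord_dblS_subproof ?ord_dbl_subproof //.
rewrite modn_ord_dblS modn_dbl_ordS eqSS !eqn_mul2l !orFb.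
by rewrite -[(ordS a' == ordS a :> nat)]/(ordS a' == ordS a) (inj_eq (@ordS_inj _)).
Qed.


Definition chk_row (c : Cnode n) : 'I_n := ord_half (val c).1.
Definition chk_col (c : Cnode n) : 'I_n := ord_half (val c).2.

Lemma chk_rowK a b : chk_row (chk a b) = a. Proof. exact: ord_dblSK. Qed.
Lemma chk_colK a b : chk_col (chk a b) = b. Proof. exact: ord_dblK. Qed.

Lemma chk_eq a b a' b' : (chk a b == chk a' b') = (a == a') && (b == b').
Proof.
apply/eqP/andP => [e | [/eqP-> /eqP->] //].
by move: (congr1 chk_row e) (congr1 chk_col e); rewrite !chk_rowK !chk_colK => -> ->.
Qed.

Lemma hvar_eq a b a' b' : (hvar a b == hvar a' b') = (a == a') && (b == b').
Proof.
apply/eqP/andP => [e | [/eqP-> /eqP->] //].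
have /(congr1 (ord_half \o fst)) := congr1 val e.
have /(congr1 (ord_half \o snd)) := congr1 val e.
by rewrite /= !ord_dblSK => -> ->.
Qed.

Lemma vvar_eq a b a' b' : (vvar a b == vvar a' b') = (a == a') && (b == b').
Proof.
apply/eqP/andP => [e | [/eqP-> /eqP->] //].
have /(congr1 (ord_half \o fst)) := congr1 val e.
have /(congr1 (ord_half \o snd)) := congr1 val e.
by rewrite /= !ord_dblK => -> /ordS_inj ->.
Qed.

Lemma hvar_neq_vvar a b a' b' : hvar a b != vvar a' b'.
Proof. by apply/eqP => /(congr1 (fun v : Vnode n => odd (val v).1)) /=; lia. Qed.

Variant cnode_spec : Cnode n -> Type := CnodeSpec a b : cnode_spec (chk a b).

Lemma CnodeP c : cnode_spec c.
Proof.
suff -> : c = chk (chk_row c) (chk_col c) by constructor.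
case: c => [[i j] ij_check]; have /andP /= [odd_i even_j] := ij_check.
by apply: val_inj; congr pair; apply: val_inj => /=; lia.
Qed.

Variant vnode_spec : Vnode n -> Type :=
  | HvarSpec a b : vnode_spec (hvar a b)
  | VvarSpec a b : vnode_spec (vvar a b).

Lemma VnodeP v : vnode_spec v.
Proof.
case: v => [[i j] ij_even]; have [odd_i | even_i] := boolP (odd i).
  suff -> : exist _ (i, j) ij_even = hvar (ord_half i) (ord_half j) by constructor.
  by apply: val_inj; congr pair; apply: val_inj => /=; move: ij_even; rewrite /is_var /=; lia.
suff -> : exist _ (i, j) ij_even = vvar (ord_pred (ord_half i)) (ord_half j) by constructor.
apply: val_inj; congr pair; rewrite ?ord_predK; apply: val_inj => /=;
  move: ij_even; rewrite /is_var /=; lia.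
Qed.

Lemma adj_hvar c a b : adj c (hvar a b) = (c == chk a b) || (c == chk a (ordS b)).
Proof.
case: (CnodeP c) => a' b'.
by rewrite adj_chk_hvar !chk_eq -andb_orr !(eq_sym a') !(eq_sym b').
Qed.

Lemma adj_vvar c a b : adj c (vvar a b) = (c == chk a b) || (c == chk (ordS a) b).
Proof.
case: (CnodeP c) => a' b'.
by rewrite adj_chk_vvar !chk_eq -andb_orl !(eq_sym a') !(eq_sym b').
Qed.

Lemma card_Cnode : #|{: Cnode n}| = (n * n)%N.
Proof.
have chk_inj : injective (fun p : 'I_n * 'I_n => chk p.1 p.2).
  by move=> [a b] [a' b'] /= /eqP; rewrite chk_eq => /andP [/eqP-> /eqP->].
rewrite (_ : (n * n)%N = #|{: 'I_n * 'I_n}|); last by rewrite card_prod card_ord.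
rewrite -(card_codom chk_inj).
by apply: eq_card => c; apply/esym/codomP; case: (CnodeP c) => a b; exists (a, b).
Qed.

Lemma card_Vnode : #|{: Vnode n}| = (2 * (n * n))%N.
Proof.
pose f (p : 'I_n * 'I_n + 'I_n * 'I_n) :=
  match p with inl (a, b) => hvar a b | inr (a, b) => vvar a b end.
have f_inj : injective f.
  move=> [[a b]|[a b]] [[a' b']|[a' b']] /eqP; rewrite /f ?hvar_eq ?vvar_eq;
  rewrite ?(negbTE (hvar_neq_vvar _ _ _ _)) 1?eq_sym ?(negbTE (hvar_neq_vvar _ _ _ _)) //;
  by case/andP => /eqP-> /eqP->.
rewrite (_ : (2 * (n * n))%N = #|{: 'I_n * 'I_n + 'I_n * 'I_n}|); last first.
  by rewrite card_sum card_prod card_ord addnn mul2n.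
rewrite -(card_codom f_inj).
apply: eq_card => v; apply/esym/codomP.
by case: (VnodeP v) => a b; [exists (inl (a, b)) | exists (inr (a, b))].
Qed.

End TorusGrid.

Local Open Scope ring_scope.

Lemma dim_ffun (F : fieldType) (T : finType) :
  \dim (fullv : {vspace {ffun T -> F^o}}) = #|T|.
Proof. by rewrite dimvf /dim /= muln1. Qed.

Section MatrixApply.
Variables (F : fieldType) (C V : finType) (A : C -> V -> F).

Definition mxapply (w : {ffun V -> F^o}) : {ffun C -> F^o} :=
  [ffun c => \sum_v A c v * w v].

Fact mxapply_is_linear : linear mxapply.
Proof.
move=> k u w; apply/ffunP => c; rewrite !ffunE scaler_sumr -big_split /=.
by apply: eq_bigr => v _; rewrite !ffunE mulrDr mulrCA.
Qed.
HB.instance Definition _ :=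
  GRing.isLinear.Build F _ _ _ mxapply mxapply_is_linear.

Lemma rank_mxapply_lt (y : C -> F) (c0 : C) : y c0 != 0 ->
  (forall v, \sum_c y c * A c v = 0) -> (\dim (limg (linfun mxapply)) < #|C|)%N.
Proof.
move=> yc0 yA; rewrite ltn_neqAle -(dim_ffun F C) dimvS ?subvf // andbT.
apply: contra yc0 => dim_full.
have L_full : limg (linfun mxapply) = fullv.
  by apply/eqP; rewrite eqEdim subvf (eqP dim_full) leqnn.
have : [ffun c => (c == c0)%:R] \in limg (linfun mxapply) by rewrite L_full memvf.
case/memv_imgP => w _ /(congr1 (fun z : {ffun C -> F^o} => \sum_c y c * z c)).
rewrite (bigD1 c0) //= big1 => [|c /negbTE c_c0]; last by rewrite ffunE c_c0 mulr0.
rewrite ffunE eqxx mulr1 addr0 lfunE /= => ->.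
under eq_bigr do rewrite ffunE big_distrr.
rewrite exchange_big /= big1 // => v _.
by under eq_bigr do rewrite mulrA; rewrite -big_distrl /= yA mul0r.
Qed.

Section Extension.
Variables (T : finType) (e : T -> V).

Definition extend (u : {ffun T -> F^o}) : {ffun V -> F^o} :=
  [ffun v => \sum_(t | e t == v) u t].

Fact extend_is_linear : linear extend.
Proof.
move=> k u w; apply/ffunP => v; rewrite !ffunE scaler_sumr -big_split /=.
by apply: eq_bigr => t _; rewrite !ffunE.
Qed.
HB.instance Definition _ := GRing.isLinear.Build F _ _ _ extend extend_is_linear.

Hypothesis e_inj : injective e.

Lemma extend_codom u t : extend u (e t) = u t.
Proof. by rewrite ffunE (big_pred1 t) // => t'; rewrite /= (inj_eq e_inj). Qed.

Lemma extend_notin_codom u v : v \notin codom e -> extend u v = 0.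
Proof.
move=> v_notin; rewrite ffunE big_pred0 // => t; apply: contraNF v_notin => /eqP <-.
exact: codom_f.
Qed.

Lemma rank_mxapply_ge :
  (forall w, mxapply w = 0 -> (forall v, v \notin codom e -> w v = 0) -> w = 0) ->
  (#|T| <= \dim (limg (linfun mxapply)))%N.
Proof.
move=> peel; set L := linfun mxapply.
have ker0 : lker (L \o linfun extend) == 0%VS.
  apply/lker0P => u1 u2; rewrite !comp_lfunE /L !lfunE /= => Lu.
  apply/eqP; rewrite -subr_eq0; apply/eqP/ffunP => t.
  rewrite -[(u1 - u2) t]extend_codom; suff -> : extend (u1 - u2) = 0 by rewrite !ffunE.
  apply: peel; first by rewrite !linearB /= Lu subrr.
  exact: extend_notin_codom.
have := limg_ker_dim (L \o linfun extend) fullv.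
rewrite (eqP ker0) capv0 dimv0 add0n dim_ffun => <-.
by rewrite limg_comp dimvS // limgS ?subvf.
Qed.

End Extension.

Lemma dim_lker_mxapply (y : C -> F) (c0 : C) (T : finType) (e : T -> V) :
  y c0 != 0 -> (forall v, \sum_c y c * A c v = 0) -> injective e ->
  (forall w, mxapply w = 0 -> (forall v, v \notin codom e -> w v = 0) -> w = 0) ->
  #|T| = #|C|.-1 -> \dim (lker (linfun mxapply)) = (#|V| - #|T|)%N.
Proof.
move=> yc0 yA e_inj peel card_T.
have rank_eq : \dim (limg (linfun mxapply)) = #|T|.
  apply/eqP; rewrite eqn_leq (rank_mxapply_ge e_inj peel) andbT card_T -ltnS.
  by rewrite prednK ?(rank_mxapply_lt yc0 yA) //; apply/card_gt0P; exists c0.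
have := limg_ker_dim (linfun mxapply) fullv.
by rewrite capfv dim_ffun rank_eq => <-; rewrite addnK.
Qed.
End MatrixApply.

Lemma ordS_ind n (P : 'I_n.+1 -> Prop) :
  P ord0 -> (forall i, P i -> P (ordS i)) -> forall i, P i.
Proof.
move=> P0 PS [i lt_i]; elim: i lt_i => [|i IHi] lt_i.
  by rewrite (_ : Ordinal _ = ord0) //; apply: val_inj.
have -> : Ordinal lt_i = ordS (Ordinal (ltnW lt_i)) by apply: val_inj; rewrite /= modn_small.
exact/PS/IHi.
Qed.

Lemma ordS_neq n (i : 'I_n.+2) : ordS i != i.
Proof.
rewrite -val_eqE /=; have := ltn_ord i; rewrite ltnS leq_eqVlt => /orP [/eqP-> | lt_i].
  by rewrite modnn.
by rewrite modn_small // gtn_eqF.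
Qed.

Lemma prod_ltn_ordS (R : comPzSemiRingType) n (f : 'I_n -> R) (b : 'I_n) :
  \prod_i f i = 1 ->
  \prod_(i < n | (i < ordS b)%N) f i = \prod_(i < n | (i < b)%N) f i * f b.
Proof.
move=> prod_f.
have prod_ltnS : \prod_(i < n | (i < b.+1)%N) f i = \prod_(i < n | (i < b)%N) f i * f b.
  rewrite (bigD1 b) //= mulrC; congr (_ * _); apply: eq_bigl => i.
  by rewrite ltnS ltn_neqAle andbC.
have [lt_b1 | ] := ltnP b.+1 n; first by rewrite -prod_ltnS /= modn_small.
rewrite leq_eqVlt ltnNge ltn_ord orbF => /eqP n_b1.
have ordS_b : (ordS b : nat) = 0%N by rewrite /= -n_b1 modnn.
rewrite -prod_ltnS big_pred0 => [|i]; last by rewrite ordS_b.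
by rewrite -[LHS]prod_f; apply: eq_bigl => i; have := ltn_ord i; lia.
Qed.

Section Labeling.
Variables (n : nat) (F : fieldType) (x : Cnode n -> Vnode n -> F).
Hypothesis x_labeling : is_labeling x.

Lemma labeling_neq0 c v : adj c v -> x c v != 0.
Proof. by rewrite x_labeling. Qed.

Lemma labeling_eq0 c v : ~~ adj c v -> x c v = 0.
Proof. by rewrite -x_labeling negbK => /eqP. Qed.

Definition transfer (c c' : Cnode n) (v : Vnode n) := x c v / x c' v.

Lemma transferV c c' v : transfer c' c v = (transfer c c' v)^-1.
Proof. by rewrite /transfer invf_div. Qed.

Lemma transfer_neq0 c c' v : adj c v -> adj c' v -> transfer c c' v != 0.
Proof. by move=> adj_c adj_c'; rewrite mulf_neq0 ?invr_eq0 ?labeling_neq0. Qed.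

(* Regrouping the cycle product by variable nodes: [v_t] is crossed from
   [c_(t-1)] to [c_t]. *)
Lemma cycle_productE k (vs : 'I_k -> Vnode n) (cs : 'I_k -> Cnode n) :
  cycle_product x vs cs = \prod_t transfer (cs (ord_pred t)) (cs t) (vs t).
Proof.
rewrite /cycle_product /transfer !prodf_div; congr (_ / _).
by rewrite [RHS](reindex_inj (@ordS_inj k)); apply: eq_bigr => t _; rewrite ordSK.
Qed.

Lemma sum_labeling_pair (y : Cnode n -> F) v c1 c2 :
  (2%:R : F) = 0 -> c1 != c2 -> (forall c, adj c v = (c == c1) || (c == c2)) ->
  y c2 = y c1 * transfer c1 c2 v -> \sum_c y c * x c v = 0.
Proof.
move=> char2 c12 adj_v y_c2.
have x_c2 : x c2 v != 0 by rewrite labeling_neq0 // adj_v eqxx orbT.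
rewrite (bigD1 c1) // (bigD1 c2) 1?eq_sym //= big1 => [|c /andP [c_c1 c_c2]]; last first.
  by rewrite labeling_eq0 ?mulr0 // adj_v negb_or c_c1.
by rewrite addr0 y_c2 /transfer mulrA divfK // -mulr2n -mulr_natr char2 mulr0.
Qed.

Lemma labeling_leaf (w : {ffun Vnode n -> F^o}) c v0 :
  mxapply x w c = 0 -> adj c v0 -> (forall v, v != v0 -> adj c v -> w v = 0) ->
  w v0 = 0.
Proof.
move=> w_c adj_v0 w_v.
suff: x c v0 * w v0 = 0.
  by move/eqP; rewrite mulf_eq0 (negbTE (labeling_neq0 adj_v0)) => /eqP.
rewrite -[RHS]w_c ffunE (bigD1 v0) //= big1 ?addr0 // => v v_v0.
by case/boolP: (adj c v) => [/(w_v v v_v0) -> | /labeling_eq0 ->]; rewrite ?mulr0 ?mul0r.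
Qed.

End Labeling.

Section BalancedLabeling.
Variables (k : nat) (F : fieldType) (x : Cnode k.+2 -> Vnode k.+2 -> F).
Local Notation n := k.+2.
Hypothesis x_labeling : is_labeling x.
Hypothesis x_balanced : forall l (vs : 'I_l -> Vnode n) (cs : 'I_l -> Cnode n),
  is_cycle vs cs -> cycle_product x vs cs = 1.

Definition htransfer (a b : 'I_n) := transfer x (chk a b) (chk a (ordS b)) (hvar a b).
Definition vtransfer (a b : 'I_n) := transfer x (chk a b) (chk (ordS a) b) (vvar a b).

Lemma prod_htransfer a : \prod_b htransfer a b = 1.
Proof.
have row : is_cycle (hvar a) (fun b => chk a (ordS b)).
  split=> //.
  - by move=> b b' /eqP; rewrite hvar_eq eqxx => /eqP.
  - by move=> b b' /eqP; rewrite chk_eq eqxx => /eqP/ordS_inj.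
  - by move=> b; rewrite !adj_hvar !eqxx !orbT.
rewrite -[RHS](x_balanced row) cycle_productE.
by apply: eq_bigr => b _; rewrite ord_predK.
Qed.

Lemma prod_vtransfer b : \prod_a vtransfer a b = 1.
Proof.
have column : is_cycle (fun a => vvar a b) (fun a => chk (ordS a) b).
  split=> //.
  - by move=> a a' /eqP; rewrite vvar_eq eqxx andbT => /eqP.
  - by move=> a a' /eqP; rewrite chk_eq eqxx andbT => /eqP/ordS_inj.
  - by move=> a; rewrite !adj_vvar !eqxx !orbT.
rewrite -[RHS](x_balanced column) cycle_productE.
by apply: eq_bigr => a _; rewrite ord_predK.
Qed.

Lemma htransfer_vtransfer a b :
  htransfer a b * vtransfer a (ordS b) = vtransfer a b * htransfer (ordS a) b.
Proof.
set a1 := ordS a; set b1 := ordS b.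
have a1_a : (a1 == a) = false by apply/negbTE/ordS_neq.
have b1_b : (b1 == b) = false by apply/negbTE/ordS_neq.
have a_a1 : (a == a1) = false by rewrite eq_sym.
have b_b1 : (b == b1) = false by rewrite eq_sym.
pose vs := tnth [tuple hvar a b; vvar a b1; hvar a1 b; vvar a b].
pose cs := tnth [tuple chk a b1; chk a1 b1; chk a1 b; chk a b].
have face : is_cycle vs cs.
  split=> //.
  - apply/tuple_uniqP; rewrite /= !inE ![vvar _ _ == hvar _ _]eq_sym.
    rewrite !hvar_eq !vvar_eq !(negbTE (hvar_neq_vvar _ _ _ _)).
    by rewrite !eqxx ?a1_a ?a_a1 ?b1_b ?b_b1.
  - apply/tuple_uniqP; rewrite /= !inE !chk_eq.
    by rewrite !eqxx ?a1_a ?a_a1 ?b1_b ?b_b1.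
  - move=> [[|[|[|[|t]]]] lt_t] //;
      rewrite /vs /cs !(tnth_nth (hvar a b)) !(tnth_nth (chk a b)) /=.
    all: rewrite ?adj_hvar ?adj_vvar ?eqxx ?orbT //.
have := x_balanced face; rewrite cycle_productE !big_ord_recl big_ord0 /vs /cs.
rewrite !(tnth_nth (hvar a b)) !(tnth_nth (chk a b)) /= mulr1.
rewrite (transferV _ (chk a1 b)) (transferV _ (chk a b)).
rewrite -/(htransfer a b) -/(vtransfer a b1) -/(htransfer a1 b) -/(vtransfer a b) => cyc1.
have h_neq0 : htransfer a1 b != 0 by rewrite transfer_neq0 // adj_hvar eqxx ?orbT.
have v_neq0 : vtransfer a b != 0 by rewrite transfer_neq0 // adj_vvar eqxx ?orbT.
rewrite -[RHS]mul1r -{1}cyc1; field.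
by rewrite h_neq0 v_neq0.
Qed.

Definition potential (a b : 'I_n) :=
  \prod_(i < n | (i < a)%N) vtransfer i ord0 * \prod_(j < n | (j < b)%N) htransfer a j.

Lemma potential_col0 a : potential a ord0 = \prod_(i < n | (i < a)%N) vtransfer i ord0.
Proof. by rewrite /potential [X in _ * X]big_pred0 ?mulr1. Qed.

Lemma potential_ordSr a b : potential a (ordS b) = potential a b * htransfer a b.
Proof. by rewrite /potential (prod_ltn_ordS _ (prod_htransfer a)) mulrA. Qed.

Lemma potential_ordSl a b : potential (ordS a) b = potential a b * vtransfer a b.
Proof.
elim/ordS_ind: b => [|b IHb].
  by rewrite !potential_col0 (prod_ltn_ordS _ (prod_vtransfer ord0)).
by rewrite !potential_ordSr IHb -[RHS]mulrA htransfer_vtransfer mulrA.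
Qed.

Definition check_potential (c : Cnode n) := potential (chk_row c) (chk_col c).

Lemma check_potential_chk a b : check_potential (chk a b) = potential a b.
Proof. by rewrite /check_potential chk_rowK chk_colK. Qed.

Lemma check_potential_neq0 : check_potential (chk ord0 ord0) != 0.
Proof. by rewrite check_potential_chk potential_col0 big_pred0 ?oner_neq0. Qed.

Lemma check_potential_left_kernel :
  (2%:R : F) = 0 -> forall v, \sum_c check_potential c * x c v = 0.
Proof.
move=> char2 v; case: (VnodeP v) => a b.
  apply: (sum_labeling_pair x_labeling char2 (c1 := chk a b) (c2 := chk a (ordS b))).
  - by rewrite chk_eq eqxx eq_sym (negbTE (ordS_neq b)).
  - by move=> c; rewrite adj_hvar.
  - by rewrite !check_potential_chk potential_ordSr.
apply: (sum_labeling_pair x_labeling char2 (c1 := chk a b) (c2 := chk (ordS a) b)).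
- by rewrite chk_eq eqxx andbT eq_sym (negbTE (ordS_neq a)).
- by move=> c; rewrite adj_vvar.
- by rewrite !check_potential_chk potential_ordSl.
Qed.

End BalancedLabeling.

Section SpanningTree.
Variables (k : nat) (F : fieldType) (x : Cnode k.+2 -> Vnode k.+2 -> F).
Local Notation n := k.+2.
Hypothesis x_labeling : is_labeling x.

(* A spanning tree of the check graph: every row without its edge hvar a 0, and
   column 0 without its edge vvar 0 0.  Its leaves are the checks chk a 1. *)
Definition tree_edge (t : 'I_n * 'I_k.+1 + 'I_k.+1) : Vnode n :=
  match t with
  | inl (a, b) => hvar a (lift ord0 b)
  | inr a => vvar (lift ord0 a) ord0
  end.

Lemma tree_edge_inj : injective tree_edge.
Proof.
move=> [[a b]|a] [[a' b']|a'] /eqP; rewrite /tree_edge ?hvar_eq ?vvar_eq;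
  rewrite ?(negbTE (hvar_neq_vvar _ _ _ _)) 1?eq_sym ?(negbTE (hvar_neq_vvar _ _ _ _)) //.
- by case/andP=> /eqP-> /eqP/lift_inj->.
- by rewrite eqxx andbT => /eqP/lift_inj->.
Qed.

Lemma hvar_notin_tree a : hvar a ord0 \notin codom tree_edge.
Proof.
apply/codomP => [[[[a' b']|a'] /eqP]]; rewrite /tree_edge.
  by rewrite hvar_eq (negbTE (neq_lift _ _)) andbF.
by rewrite (negbTE (hvar_neq_vvar _ _ _ _)).
Qed.

Lemma vvar_notin_tree a b : (a == ord0) || (b != ord0) -> vvar a b \notin codom tree_edge.
Proof.
move=> ab; apply/codomP => [[[[a' b']|a'] /eqP]]; rewrite /tree_edge.
  by rewrite eq_sym (negbTE (hvar_neq_vvar _ _ _ _)).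
rewrite vvar_eq => /andP [/eqP a_a' /eqP b_0]; move: ab.
by rewrite a_a' b_0 eqxx orbF eq_sym (negbTE (neq_lift _ _)).
Qed.

Lemma tree_supported_kernel (w : {ffun Vnode n -> F^o}) :
  mxapply x w = 0 -> (forall v, v \notin codom tree_edge -> w v = 0) -> w = 0.
Proof.
move=> w_ker w_tree; have w_chk c : mxapply x w c = 0 by rewrite w_ker ffunE.
have w_hvar a b : w (hvar a b) = 0.
  elim/ordS_ind: b => [|b IHb]; first exact/w_tree/hvar_notin_tree.
  have [-> | b1_neq0] := eqVneq (ordS b) ord0; first exact/w_tree/hvar_notin_tree.
  apply: (labeling_leaf x_labeling (w_chk (chk a (ordS b)))).
    by rewrite adj_hvar eqxx.
  move=> v; case: (VnodeP v) => a' b'.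
    rewrite hvar_eq adj_chk_hvar => v_neq /andP [/eqP a'_a].
    rewrite a'_a eqxx /= in v_neq *.
    case/orP => /eqP b'_b; first by rewrite b'_b eqxx in v_neq.
    by rewrite (ordS_inj b'_b).
  rewrite adj_chk_vvar => _ /andP [_ /eqP->]; apply/w_tree/vvar_notin_tree.
  by rewrite b1_neq0 orbT.
have w_vvar0 a : w (vvar a ord0) = 0.
  elim/ordS_ind: a => [|a IHa]; first by apply/w_tree/vvar_notin_tree; rewrite eqxx.
  apply: (labeling_leaf x_labeling (w_chk (chk (ordS a) ord0))).
    by rewrite adj_vvar eqxx.
  move=> v; case: (VnodeP v) => a' b' //; rewrite vvar_eq adj_chk_vvar => v_neq.
  case/andP => /orP [/eqP a'_a1 | /eqP/ordS_inj a'_a] /eqP b'_0.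
    by rewrite a'_a1 b'_0 !eqxx in v_neq.
  by rewrite a'_a b'_0.
apply/ffunP => v; rewrite ffunE; case: (VnodeP v) => a b //.
have [-> // | b_neq0] := eqVneq b ord0.
by apply/w_tree/vvar_notin_tree; rewrite b_neq0 orbT.
Qed.

End SpanningTree.

Theorem lemma4 (F : finFieldType) (m n : nat) (hn : (2 <= n)%N)
  (hq : #|F| = (2 ^ m)%N)
  (x : Cnode n -> Vnode n -> F) (hx : is_labeling x)
  (hcyc : forall (k : nat) (vs : 'I_k -> Vnode n) (cs : 'I_k -> Cnode n),
      is_cycle vs cs -> cycle_product x vs cs = 1%R) :
  \dim (codeX x) = (n ^ 2 + 1)%N.
Proof.
case: n hn x hx hcyc => [|[|k]] // _ x hx hcyc.
have char2 : (2%:R : F) = 0 by apply: pcharf0; apply: card_finPcharP hq _.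
rewrite /codeX (_ : syndrome x = mxapply x) //.
rewrite (dim_lker_mxapply (check_potential_neq0 x)
  (check_potential_left_kernel hx hcyc char2) (@tree_edge_inj k) (tree_supported_kernel hx)).
  by rewrite card_Vnode card_sum card_prod !card_ord; lia.
by rewrite card_Cnode card_sum card_prod !card_ord; lia.
Qed.
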